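(* Let $(\mathcal{Y}_i)_{i\in[K]}$ be any family of pairwise disjoint measurable subsets of $\mathcal{Y}$ with $P_Y(\mathcal{Y}_i)>0$ for every $i$, and put $\tilde{\mathcal{Y}}=\bigcup_{i=1}^K\mathcal{Y}_i$. Let $f^*_{\mathcal{X}}:\mathcal{X}\to\mathbb{R}^d$, $f^*_{\mathcal{Y}}:\mathcal{Y}\to\mathbb{R}^d$ and $\tau^*>0$ satisfy, for some constant $\Gamma\in\mathbb{R}$, $$g^*(x,y):=\frac{1}{\tau^*}f^*_{\mathcal{X}}(x)^\top f^*_{\mathcal{Y}}(y)=\ln\frac{p(x,y)}{p(x)p(y)}+\Gamma$$ for every $x\in\operatorname{supp}p_X$ and every $y\in\tilde{\mathcal{Y}}$. Let $\bar h^{g^*}(x)=\bar W^\top f^*_{\mathcal{X}}(x)+\bar b$ with $\bar W=[\bar w_1,\dots,\bar w_K]$, $\bar w_i=\mathbb{E}_{y\sim p_Y(\cdot\mid\mathcal{Y}_i)}[\tfrac{1}{\tau^*}f^*_{\mathcal{Y}}(y)]$ and $\bar b=(\ln P_Y(\mathcal{Y}_1),\dots,\ln P_Y(\mathcal{Y}_K))^\top$. Then $$\mathcal{L}_{\sup}(\bar h^{g^*})-\mathcal{L}_{\sup}(h^* )\le \mathbb{E}_{x\sim p_X}\Big[\mathrm{KL}\big(P_C(\cdot\mid x)\,\big\|\,P_C(\cdot\mid x;(\mathcal{Y}_i)_{i\in[K]})\big)\Big]+\mathbb{E}_{(x,c)\sim p(x,c)}\Big[\mathrm{KL}\big(p_Y(\cdot\mid\mathcal{Y}_c)\,\big\|\,p_Y(\cdot\mid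 x,\mathcal{Y}_c)\big)\Big].$$
   Context: $\mathcal{X},\mathcal{Y}$ are input spaces; $(X,Y)$ has joint density $p(x,y)=p_{X,Y}(x,y)$ with marginal densities $p(x)=p_X(x)$, $p(y)=p_Y(y)$ and conditional density $p(y\mid x)$. For $\mathcal{Y}'\subseteq\mathcal{Y}$, $P_Y(\mathcal{Y}')=\int_{\mathcal{Y}'}p(y)\,dy$ and $P_Y(\mathcal{Y}'\mid x)=\int_{\mathcal{Y}'}p(y\mid x)\,dy$. $[K]=\{1,\dots,K\}$. Labels: $C\in[K]$ with conditional probability $P_C(c\mid x)$, and $p(x,c)=P_C(c\mid x)p_X(x)$. For $h:\mathcal{X}\to\mathbb{R}^K$, $\mathcal{L}_{\sup}(h)=\mathbb{E}_{(x,c)\sim p(x,c)}\big[-\ln\frac{\exp h(x)_c}{\sum_{i=1}^K\exp h(x)_i}\big]$, and $h^*$ denotes a minimizer of $\mathcal{L}_{\sup}$ over all measurable $h$ (e.g. $h^*(x)_i=\ln P_C(i\mid x)$), so $\mathcal{L}_{\sup}(h^* )=\mathbb{E}_{p(x)}[H(P_C(\cdot\mid x))]$. Definitions: $p_Y(y\mid\mathcal{Y}_i)=p(y)/P_Y(\mathcal{Y}_i)$ if $y\in\mathcal{Y}_i$ and $0$ otherwise; $p_Y(y\mid x,\mathcal{Y}_i)=p(y\mid x)/P_Y(\mathcal{Y}_i\mid x)$ if $y\in\mathcal{Y}_i$ and $0$ otherwise; $P_C(c\mid x;(\mathcal{Y}_i)_{i\in[K]})=P_Y(\mathcal{Y}_c\mid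 x)/P_Y(\tilde{\mathcal{Y}}\mid x)$, a probability distribution on $[K]$. All expectations and KL divergences are assumed to be well defined and finite (in particular $P_Y(\mathcal{Y}_i\mid x)>0$ for $x\in\operatorname{supp}p_X$). *)

From HB Require Import structures.
From mathcomp Require Import all_boot all_order all_algebra.
From mathcomp Require Import all_classical all_reals all_analysis.
Set Implicit Arguments. Unset Strict Implicit. Unset Printing Implicit Defensive.
Import Order.TTheory GRing.Theory Num.Theory.
Local Open Scope classical_set_scope.
Local Open Scope ring_scope.

Section Defs.
Context {R : realType} {dX dY : measure_display}
  {TX : measurableType dX} {TY : measurableType dY}.
Variables (muX : {measure set TX -> \bar R}) (muY : {measure set TY -> \bar R}).
Variable (p : TX -> TY -> R). (* joint density p(x,y) w.r.t. muX (x) muY *)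

Definition margX (x : TX) : R := fine (\int[muY]_y (p x y)%:E).
Definition margY (y : TY) : R := fine (\int[muX]_x (p x y)%:E).
(* conditional density p(y|x) (meaningful for margX x > 0) *)
Definition condY (x : TX) (y : TY) : R := p x y / margX x.

Definition PY (A : set TY) : R := Rintegral muY A margY.
Definition PYx (x : TX) (A : set TY) : R := Rintegral muY A (condY x).

Definition pY_on (A : set TY) (y : TY) : R :=
  if `[< A y >] then margY y / PY A else 0.
Definition pYx_on (x : TX) (A : set TY) (y : TY) : R :=
  if `[< A y >] then condY x y / PYx x A else 0.

Definition KLdens (A : set TY) (q r : TY -> R) : \bar R :=
  \int[muY]_(y in A) (q y * ln (q y / r y))%:E.

Variable K : nat.
Variable Ys : 'I_K -> set TY.

Definition Ytilde : set TY := \bigcup_(i in [set: 'I_K]) Ys i.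

Definition PC_Y (x : TX) (c : 'I_K) : R := PYx x (Ys c) / PYx x Ytilde.

Definition KLfin (P Q : 'I_K -> R) : R := \sum_(c < K) P c * ln (P c / Q c).

Definition softmax (v : 'I_K -> R) (c : 'I_K) : R :=
  expR (v c) / \sum_(i < K) expR (v i).

Variable PC : TX -> 'I_K -> R.

(* L_sup(h) = E_{(x,c) ~ p(x,c)} [ - ln softmax(h(x))_c ],  p(x,c) = P_C(c|x) p_X(x) *)
Definition Lsup (h : TX -> 'I_K -> R) : \bar R :=
  \int[muX]_x (margX x * \sum_(c < K) PC x c * - ln (softmax (h x) c))%:E.

Definition EKL_label : \bar R :=
  \int[muX]_x (margX x * KLfin (PC x) (PC_Y x))%:E.

Definition KL_Y (x : TX) (c : 'I_K) : \bar R :=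
  KLdens (Ys c) (pY_on (Ys c)) (pYx_on x (Ys c)).
Definition EKL_Y : \bar R :=
  \int[muX]_x (\sum_(c < K) (margX x * PC x c)%:E * KL_Y x c)%E.

Variable d : nat.
Variables (fX : TX -> 'I_d -> R) (fY : TY -> 'I_d -> R) (tau : R).

Definition wbar (i : 'I_K) (j : 'I_d) : R :=
  Rintegral muY (Ys i) (fun y => pY_on (Ys i) y * (fY y j / tau)).

Definition hbar (x : TX) (i : 'I_K) : R :=
  \sum_(j < d) wbar i j * fX x j + ln (PY (Ys i)).

End Defs.

From HB Require Import structures.
From mathcomp Require Import all_boot all_order all_algebra.
From mathcomp Require Import all_classical all_reals all_analysis.
From mathcomp Require Import measurable_realfun ring lra.

(* Fix x with p_X(x) > 0 and a class i, and write q = p_Y(.|Y_i), r = p_Y(.|x,Y_i).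
   On Y_i the hypothesis on g* reads
     g*(x,y) = ln (r y / q y) + Gamma + ln P_Y(Y_i|x) - ln P_Y(Y_i),
   so integrating against q gives hbar(x)_i = Gamma + ln P_Y(Y_i|x) - KL(q || r).
   This identifies the second KL term of class i exactly, and since KL >= 0 it
   bounds the log-partition function of hbar(x) by Gamma + ln P_Y(Ytilde|x). Hence
   -ln softmax(hbar(x))_c <= -ln P_C(c|x;(Y_i)) + KL(q_c || r_c); averaging over
   c ~ P_C(.|x) and using Gibbs' inequality H(P_C(.|x)) <= cross entropy of h*(x)
   gives the bound pointwise in x, and it remains to integrate. *)

Set Implicit Arguments.
Unset Strict Implicit.
Unset Printing Implicit Defensive.
Import Order.TTheory GRing.Theory Num.Theory.
Local Open Scope classical_set_scope.
Local Open Scope ring_scope.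

Section real_lemmas.
Variable R : realType.

Lemma ln_le_subr1 (t : R) : 0 < t -> ln t <= t - 1.
Proof. by move=> t0; have := @le_ln1Dx R (t - 1); rewrite addrCA subrr addr0; apply; lra. Qed.

Lemma mulr_ln_div_ge (P Q : R) : 0 <= P -> 0 < Q -> P - Q <= P * ln (P / Q).
Proof.
rewrite le_eqVlt => /orP[/eqP <- Q0|P0 Q0]; first by rewrite mul0r sub0r oppr_le0 ltW.
have := ler_wpM2l (ltW P0) (ln_le_subr1 (divr_gt0 Q0 P0)).
rewrite mulrBr mulr1 mulrCA divff ?gt_eqF // mulr1 !ln_div ?posrE //; lra.
Qed.

Lemma mulr_ln_div_addN (P Q : R) : 0 <= P -> 0 < Q ->
  P * ln (P / Q) + P * - ln P = P * - ln Q.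
Proof.
rewrite le_eqVlt => /orP[/eqP <-|P0 Q0]; first by rewrite !mul0r addr0.
by rewrite ln_div ?posrE //; ring.
Qed.

End real_lemmas.

Section finite_distributions.
Variables (R : realType) (K : nat).
Implicit Types (v P Q : 'I_K -> R).

Lemma entropy_le_cross_entropy P Q : (forall c, 0 <= P c) -> (forall c, 0 < Q c) ->
  \sum_(c < K) P c = 1 -> \sum_(c < K) Q c <= 1 ->
  \sum_(c < K) P c * - ln (P c) <= \sum_(c < K) P c * - ln (Q c).
Proof.
move=> P0 Q0 P1 Q1.
have gibbs : \sum_(c < K) (P c - Q c) <= \sum_(c < K) P c * ln (P c / Q c).
  by apply: ler_sum => c _; exact: mulr_ln_div_ge.
rewrite sumrB P1 in gibbs.
under [X in _ <= X]eq_bigr do rewrite -mulr_ln_div_addN //.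
rewrite big_split /=; lra.
Qed.

Lemma sum_expR_gt0 v (c : 'I_K) : 0 < \sum_(i < K) expR (v i).
Proof.
rewrite (bigD1 c) //=; apply: (lt_le_trans (expR_gt0 (v c))); rewrite lerDl.
by apply: sumr_ge0 => i _; exact/ltW/expR_gt0.
Qed.

Lemma softmax_gt0 v c : 0 < softmax v c.
Proof. by rewrite divr_gt0 ?expR_gt0 // (sum_expR_gt0 v c). Qed.

Lemma sum_softmax_le1 v : \sum_(c < K) softmax v c <= 1.
Proof.
rewrite -mulr_suml; have [->|Z0] := eqVneq (\sum_(i < K) expR (v i)) 0.
  by rewrite mul0r ler01.
by rewrite divff.
Qed.

Lemma ln_softmax v c : ln (softmax v c) = v c - ln (\sum_(i < K) expR (v i)).
Proof. by rewrite ln_div ?posrE ?expR_gt0 ?(sum_expR_gt0 v c) // expRK. Qed.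

Lemma cross_entropy_softmax_ge0 P v : (forall c, 0 <= P c) ->
  0 <= \sum_(c < K) P c * - ln (softmax v c).
Proof.
move=> P0; apply: sumr_ge0 => c _; apply: mulr_ge0 => //.
rewrite oppr_ge0 ln_le0 // (le_trans _ (sum_softmax_le1 v)) // (bigD1 c) //= lerDl.
by apply: sumr_ge0 => i _; exact/ltW/softmax_gt0.
Qed.

End finite_distributions.

Section sigma_finite_measure_of.
Context {R : realType} {d : measure_display} {T : measurableType d}.
Variables (mu : {measure set T -> \bar R}) (mu_sf : sigma_finite setT mu).

(* [mu] packaged with the sigma-finite structure required by the Fubini-Tonelli lemmas *)
Definition sigma_finite_measure_of : set T -> \bar R := let _ := mu_sf in mu.
HB.instance Definition _ := Measure.on sigma_finite_measure_of.
HB.instance Definition _ :=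
  Measure_isSigmaFinite.Build _ _ _ sigma_finite_measure_of mu_sf.

End sigma_finite_measure_of.

Section fubini_measurability.
Context {R : realType} {d1 d2 : measure_display}
  {T1 : measurableType d1} {T2 : measurableType d2}.

Lemma measurable_fun_fubini_tonelli_F' (m2 : {measure set T2 -> \bar R})
  (f : T1 * T2 -> \bar R) : sigma_finite setT m2 ->
  measurable_fun setT f -> (forall z, (0 <= f z)%E) ->
  measurable_fun setT (fun x => \int[m2]_y f (x, y))%E.
Proof. by move=> m2_sf; exact: (@measurable_fun_fubini_tonelli_F _ _ T1 T2 R
  (sigma_finite_measure_of m2_sf) f). Qed.

Lemma measurable_fun_fubini_tonelli_G' (m1 : {measure set T1 -> \bar R})
  (f : T1 * T2 -> \bar R) : sigma_finite setT m1 ->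
  measurable_fun setT f -> (forall z, (0 <= f z)%E) ->
  measurable_fun setT (fun y => \int[m1]_x f (x, y))%E.
Proof. by move=> m1_sf; exact: (@measurable_fun_fubini_tonelli_G _ _ T1 T2 R
  (sigma_finite_measure_of m1_sf) f). Qed.

End fubini_measurability.

Section Rintegral_lemmas.
Context {R : realType} {d : measure_display} {T : measurableType d}.
Variables (mu : {measure set T -> \bar R}) (A : set T) (mA : measurable A).
Implicit Types f g : T -> R.

Lemma integrable_Rintegral_gt0 f : measurable_fun A f ->
  (forall y, A y -> 0 <= f y) -> 0 < Rintegral mu A f ->
  mu.-integrable A (EFin \o f).
Proof.
move=> mf f0; rewrite /Rintegral => If_gt0.
apply/integrableP; split; first exact/measurable_EFinP.
rewrite (eq_integral (fun y => (f y)%:E)); last first.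
  by move=> y /[!inE] Ay /=; rewrite ger0_norm ?f0.
by move: If_gt0; case: (\int[mu]_(y in A) _)%E => [r _|/=|//]; rewrite ?ltxx ?ltry.
Qed.

Lemma integrableZr_EFin f (c : R) : mu.-integrable A (EFin \o f) ->
  mu.-integrable A (EFin \o (fun y => f y * c)).
Proof.
move=> If; apply: (eq_integrable mA _ _ _ (integrableZr mA c If)) => y _ /=.
by rewrite EFinM.
Qed.

Lemma integrableD_EFin f g : mu.-integrable A (EFin \o f) ->
  mu.-integrable A (EFin \o g) -> mu.-integrable A (EFin \o (f \+ g)).
Proof.
move=> If Ig; apply: (eq_integrable mA _ _ _ (integrableD mA If Ig)) => y _ /=.
by rewrite EFinD.
Qed.

Lemma integrableB_EFin f g : mu.-integrable A (EFin \o f) ->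
  mu.-integrable A (EFin \o g) -> mu.-integrable A (EFin \o (f \- g)).
Proof.
move=> If Ig; apply: (eq_integrable mA _ _ _ (integrableB mA If Ig)) => y _ /=.
by rewrite EFinB.
Qed.

Lemma Rintegral_sum (I : Type) (s : seq I) (F : I -> T -> R) :
  (forall j, mu.-integrable A (EFin \o F j)) ->
  mu.-integrable A (EFin \o (fun y => \sum_(j <- s) F j y)) /\
  Rintegral mu A (fun y => \sum_(j <- s) F j y) = \sum_(j <- s) Rintegral mu A (F j).
Proof.
move=> IF; elim: s => [|j s [Is IsE]].
  under eq_fun do rewrite big_nil.
  by rewrite big_nil Rintegral_cst // mul0r; split => //; exact: integrable0.
under eq_fun do rewrite big_cons.
by rewrite big_cons RintegralD // IsE; split => //; exact: integrableD_EFin.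
Qed.

Lemma Rintegral_mul_ln_div_ge (q r u : T -> R) :
  mu.-integrable A (EFin \o q) -> mu.-integrable A (EFin \o r) ->
  mu.-integrable A (EFin \o u) ->
  (forall y, A y -> 0 <= q y) -> (forall y, A y -> 0 < r y) ->
  (forall y, A y -> u y = q y * ln (q y / r y)) ->
  Rintegral mu A q - Rintegral mu A r <= Rintegral mu A u.
Proof.
move=> Iq Ir Iu q0 r0 uE; rewrite -RintegralB //.
apply: le_Rintegral => //; first exact: integrableB_EFin.
by move=> y Ay; rewrite uE //; exact: mulr_ln_div_ge (q0 y Ay) (r0 y Ay).
Qed.

End Rintegral_lemmas.

Section representation_bound.
Context {R : realType} {dX dY : measure_display}
  {TX : measurableType dX} {TY : measurableType dY}.
Variables (muX : {measure set TX -> \bar R}) (muY : {measure set TY -> \bar R})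
  (p : TX -> TY -> R).
Hypotheses (muX_sf : sigma_finite setT muX) (muY_sf : sigma_finite setT muY)
  (p_ge0 : forall x y, 0 <= p x y)
  (p_meas : measurable_fun setT (fun z : TX * TY => p z.1 z.2)).

Local Notation pX := (margX muY p).
Local Notation pY := (margY muX p).

Lemma margX_ge0 x : 0 <= pX x.
Proof. by rewrite fine_ge0 // integral_ge0 // => y _; rewrite lee_fin. Qed.

Lemma margY_ge0 y : 0 <= pY y.
Proof. by rewrite fine_ge0 // integral_ge0 // => x _; rewrite lee_fin. Qed.

Lemma condY_ge0 x y : 0 <= condY muY p x y.
Proof. by rewrite divr_ge0 ?margX_ge0. Qed.

Let measurable_pE : measurable_fun setT (fun z : TX * TY => (p z.1 z.2)%:E).
Proof. exact/measurable_EFinP. Qed.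

Lemma measurable_margX : measurable_fun setT pX.
Proof.
apply: (measurableT_comp (fine_measurable measurableT)).
by apply: (measurable_fun_fubini_tonelli_F' muY_sf measurable_pE) => z; rewrite lee_fin.
Qed.

Lemma measurable_margY : measurable_fun setT pY.
Proof.
apply: (measurableT_comp (fine_measurable measurableT)).
by apply: (measurable_fun_fubini_tonelli_G' muX_sf measurable_pE) => z; rewrite lee_fin.
Qed.

Lemma measurable_condY x : measurable_fun setT (condY muY p x).
Proof.
apply: measurable_funM; last exact: measurable_cst.
exact: (measurable_fun_pair2 x p_meas).
Qed.

Variables (K : nat) (Ys : 'I_K -> set TY).
Hypotheses (Ys_meas : forall i, measurable (Ys i))
  (Ys_disj : forall i j, i != j -> Ys i `&` Ys j = set0)
  (PY_gt0 : forall i, 0 < PY muX muY p (Ys i))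
  (PYx_gt0 : forall x, 0 < pX x -> forall i, 0 < PYx muY p x (Ys i))
  (p_pos : forall x y, 0 < pX x -> Ytilde Ys y -> 0 < p x y /\ 0 < pY y).

Lemma integrable_condY x i : 0 < pX x ->
  muY.-integrable (Ys i) (EFin \o condY muY p x).
Proof.
move=> x_pos; apply: integrable_Rintegral_gt0 => //; last exact: PYx_gt0.
  exact: measurable_funTS (measurable_condY x).
by move=> y _; exact: condY_ge0.
Qed.

Lemma PYx_Ytilde x : 0 < pX x ->
  PYx muY p x (Ytilde Ys) = \sum_(i < K) PYx muY p x (Ys i).
Proof.
move=> x_pos.
have -> : Ytilde Ys = \big[setU/set0]_(i <- index_enum 'I_K) Ys i.
  rewrite -bigcup_seq /Ytilde; congr (\bigcup_(i in _) _).
  by apply/seteqP; split => i //= _; rewrite mem_index_enum.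
rewrite /PYx /Rintegral integral_bigsetU_EFin //.
- rewrite (eq_bigr (fun i => (PYx muY p x (Ys i))%:E)) ?sumEFin // => i _.
  by rewrite fineK // integrable_fin_num // integrable_condY.
- exact: index_enum_uniq.
- by apply/trivIsetP => i j _ _; exact: Ys_disj.
- exact/measurable_funTS/measurable_EFinP/measurable_condY.
Qed.

Lemma PYx_Ytilde_gt0 x (c : 'I_K) : 0 < pX x -> 0 < PYx muY p x (Ytilde Ys).
Proof.
move=> x_pos; rewrite PYx_Ytilde // (bigD1 c) //=.
rewrite ltr_pwDl ?PYx_gt0 // sumr_ge0 // => i _.
exact/ltW/PYx_gt0.
Qed.

Section class_densities.
Variables (x : TX) (x_pos : 0 < pX x) (i : 'I_K).
Local Notation A := (Ys i).
Local Notation q := (pY_on muX muY p (Ys i)).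
Local Notation r := (pYx_on muY p x (Ys i)).

Let mA : measurable A := Ys_meas i.

Let Ytilde_A y : A y -> Ytilde Ys y.
Proof. by exists i. Qed.

Lemma pY_onE y : A y -> q y = pY y / PY muX muY p A.
Proof. by move=> Ay; rewrite /pY_on asboolT. Qed.

Lemma pYx_onE y : A y -> r y = condY muY p x y / PYx muY p x A.
Proof. by move=> Ay; rewrite /pYx_on asboolT. Qed.

Lemma pY_on_gt0 y : A y -> 0 < q y.
Proof.
by move=> Ay; rewrite pY_onE // divr_gt0 //; have [] := p_pos x_pos (Ytilde_A Ay).
Qed.

Lemma pYx_on_gt0 y : A y -> 0 < r y.
Proof.
move=> Ay; have [pxy_gt0 _] := p_pos x_pos (Ytilde_A Ay).
by rewrite pYx_onE // !divr_gt0 // PYx_gt0.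
Qed.

Let integrable_margY : muY.-integrable A (EFin \o pY).
Proof.
apply: integrable_Rintegral_gt0 => //; last exact: PY_gt0.
  exact: measurable_funTS measurable_margY.
by move=> y _; exact: margY_ge0.
Qed.

Lemma integrable_pY_on : muY.-integrable A (EFin \o q).
Proof.
apply: (eq_integrable mA (EFin \o (fun y => pY y / PY muX muY p A))).
  by move=> y /[!inE] Ay /=; rewrite pY_onE.
exact: integrableZr_EFin.
Qed.

Lemma integrable_pYx_on : muY.-integrable A (EFin \o r).
Proof.
apply: (eq_integrable mA (EFin \o (fun y => condY muY p x y / PYx muY p x A))).
  by move=> y /[!inE] Ay /=; rewrite pYx_onE.
exact/integrableZr_EFin/integrable_condY.
Qed.

Lemma Rintegral_pY_on : Rintegral muY A q = 1.
Proof.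
rewrite (@eq_Rintegral _ _ _ _ _ (fun y => pY y / PY muX muY p A)); last first.
  by move=> y /[!inE] Ay; rewrite asboolT.
by rewrite RintegralZr // -/(PY muX muY p A) divff // gt_eqF.
Qed.

Lemma Rintegral_pYx_on : Rintegral muY A r = 1.
Proof.
rewrite (@eq_Rintegral _ _ _ _ _ (fun y => condY muY p x y / PYx muY p x A)); last first.
  by move=> y /[!inE] Ay; rewrite asboolT.
by rewrite RintegralZr ?divff ?gt_eqF ?PYx_gt0 ?integrable_condY.
Qed.

End class_densities.

Variables (d : nat) (fX : TX -> 'I_d -> R) (fY : TY -> 'I_d -> R) (tau Gamma : R).
Hypotheses
  (gstarE : forall x y, 0 < pX x -> Ytilde Ys y ->
     (\sum_(j < d) fX x j * fY y j) / tau = ln (p x y / (pX x * pY y)) + Gamma)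
  (integrable_fY : forall i j, muY.-integrable (Ys i)
     (fun y => (pY_on muX muY p (Ys i) y * (fY y j / tau))%:E)).

Local Notation hb := (hbar muX muY p Ys fX fY tau).

Section class_representation.
Variables (x : TX) (x_pos : 0 < pX x) (i : 'I_K).
Local Notation A := (Ys i).
Local Notation q := (pY_on muX muY p (Ys i)).
Local Notation r := (pYx_on muY p x (Ys i)).
Local Notation g y := ((\sum_(j < d) fX x j * fY y j) / tau).
Local Notation kl y := (q y * ln (q y / r y)).
Local Notation offset := (Gamma + ln (PYx muY p x (Ys i)) - ln (PY muX muY p (Ys i))).

Let mA : measurable A := Ys_meas i.

Lemma gstar_ln_ratio y : A y -> g y = ln (r y / q y) + offset.
Proof.
move=> Ay; have Yy : Ytilde Ys y by exists i.
have [pxy_gt0 pY_gt0] := p_pos x_pos Yy.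
rewrite gstarE //.
rewrite pY_onE // pYx_onE // !ln_div ?lnM ?posrE ?divr_gt0 ?mulr_gt0 ?PYx_gt0 //.
ring.
Qed.

Lemma hbar_Rintegral : muY.-integrable A (EFin \o (fun y => q y * g y)) /\
  hb x i = Rintegral muY A (fun y => q y * g y) + ln (PY muX muY p A).
Proof.
have Ij j : muY.-integrable A (EFin \o (fun y => q y * (fY y j / tau) * fX x j)).
  exact/integrableZr_EFin/integrable_fY.
have [Isum sumE] := Rintegral_sum mA (index_enum 'I_d) Ij.
have qgE y : q y * g y = \sum_(j < d) q y * (fY y j / tau) * fX x j.
  by rewrite mulr_suml mulr_sumr; apply: eq_bigr => j _; ring.
split.
  by apply: (eq_integrable mA _ _ _ Isum) => y _ /=; rewrite qgE.
rewrite (@eq_Rintegral _ _ _ _ _ (fun y => \sum_(j < d) q y * (fY y j / tau) * fX x j));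
  last by move=> y _; rewrite qgE.
rewrite /hbar sumE; congr (_ + _); apply: eq_bigr => j _.
by rewrite RintegralZr //; exact: integrable_fY.
Qed.

Lemma hbar_KL : muY.-integrable A (EFin \o (fun y => kl y)) /\
  hb x i = Gamma + ln (PYx muY p x A) - Rintegral muY A (fun y => kl y).
Proof.
have [Iqg hbE] := hbar_Rintegral.
have klE y : A y -> kl y = q y * offset - q y * g y.
  move=> Ay; have q_gt0 := pY_on_gt0 x_pos Ay; have r_gt0 := pYx_on_gt0 x_pos Ay.
  by rewrite gstar_ln_ratio // !ln_div ?posrE //; ring.
have Iqo : muY.-integrable A (EFin \o (fun y => q y * offset)).
  exact/integrableZr_EFin/integrable_pY_on.
split.
  apply: (eq_integrable mA _ _ _ (integrableB_EFin mA Iqo Iqg)) => y /[!inE] Ay /=.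
  by rewrite klE.
rewrite (@eq_Rintegral _ _ _ _ _ (fun y => q y * offset - q y * g y)); last first.
  by move=> y /[!inE]; exact: klE.
rewrite RintegralB // RintegralZr ?integrable_pY_on // Rintegral_pY_on //.
rewrite hbE; ring.
Qed.

Lemma KL_YE : KL_Y muX muY p Ys x i = (Rintegral muY A (fun y => kl y))%:E.
Proof.
rewrite /Rintegral fineK; last exact/integrable_fin_num/(proj1 hbar_KL).
by apply: eq_integral => y _.
Qed.

Lemma Rintegral_KL_ge0 : 0 <= Rintegral muY A (fun y => kl y).
Proof.
have := Rintegral_mul_ln_div_ge mA (integrable_pY_on i)
  (integrable_pYx_on x_pos i) (proj1 hbar_KL).
rewrite Rintegral_pY_on // Rintegral_pYx_on // subrr; apply => //.
- by move=> y Ay; exact: ltW (pY_on_gt0 x_pos Ay).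
- by move=> y Ay; have := pYx_on_gt0 x_pos Ay.
Qed.

End class_representation.

Lemma KL_Y_hbarE x i : 0 < pX x ->
  KL_Y muX muY p Ys x i = (Gamma + ln (PYx muY p x (Ys i)) - hb x i)%:E.
Proof. by move=> x_pos; rewrite KL_YE // (proj2 (hbar_KL x_pos i)); congr EFin; ring. Qed.

Lemma hbar_le x i : 0 < pX x -> hb x i <= Gamma + ln (PYx muY p x (Ys i)).
Proof.
move=> x_pos; rewrite (proj2 (hbar_KL x_pos i)) lerBlDr lerDl.
exact: Rintegral_KL_ge0.
Qed.

Lemma ln_sum_expR_hbar_le x (c : 'I_K) : 0 < pX x ->
  ln (\sum_(i < K) expR (hb x i)) <= Gamma + ln (PYx muY p x (Ytilde Ys)).
Proof.
move=> x_pos; have PYx_pos := PYx_Ytilde_gt0 c x_pos.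
have Z_le : \sum_(i < K) expR (hb x i) <= expR Gamma * PYx muY p x (Ytilde Ys).
  rewrite PYx_Ytilde // mulr_sumr; apply: ler_sum => i _.
  rewrite -[X in _ <= expR _ * X](lnK (PYx_gt0 x_pos i)) -expRD ler_expR.
  exact: hbar_le.
rewrite -ler_expR lnK ?posrE ?(sum_expR_gt0 (hb x) c) //.
by rewrite expRD lnK ?posrE.
Qed.

Lemma neg_ln_softmax_hbar_le x c : 0 < pX x ->
  - ln (softmax (hb x) c)
    <= - ln (PC_Y muY p Ys x c) + fine (KL_Y muX muY p Ys x c).
Proof.
move=> x_pos; have := ln_sum_expR_hbar_le c x_pos.
rewrite ln_softmax KL_Y_hbarE // /PC_Y ln_div ?posrE ?PYx_gt0 ?(PYx_Ytilde_gt0 c) //=.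
lra.
Qed.

Lemma PC_Y_gt0 x c : 0 < pX x -> 0 < PC_Y muY p Ys x c.
Proof. by move=> x_pos; rewrite divr_gt0 ?PYx_gt0 ?(PYx_Ytilde_gt0 c). Qed.

Variable PC : TX -> 'I_K -> R.
Hypotheses (PC_ge0 : forall x c, 0 <= PC x c)
  (PC_sum1 : forall x, \sum_(c < K) PC x c = 1)
  (PC_meas : forall c, measurable_fun setT (fun x => PC x c))
  (fX_meas : forall j, measurable_fun setT (fun x => fX x j)).

Local Notation xent h x := (\sum_(c < K) PC x c * - ln (softmax (h x) c)).

Lemma cross_entropy_hbar_le (h : TX -> 'I_K -> R) x : 0 < pX x ->
  xent hb x <= KLfin (PC x) (PC_Y muY p Ys x)
    + \sum_(c < K) PC x c * fine (KL_Y muX muY p Ys x c) + xent h x.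
Proof.
move=> x_pos.
have := entropy_le_cross_entropy (PC_ge0 x) (softmax_gt0 (h x)) (PC_sum1 x)
  (sum_softmax_le1 (h x)).
suff : xent hb x <= KLfin (PC x) (PC_Y muY p Ys x)
    + \sum_(c < K) PC x c * fine (KL_Y muX muY p Ys x c)
    + \sum_(c < K) PC x c * - ln (PC x c) by lra.
rewrite /KLfin -!big_split /=; apply: ler_sum => c _.
rewrite addrAC mulr_ln_div_addN ?PC_Y_gt0 // -mulrDr.
by apply: ler_wpM2l => //; exact: neg_ln_softmax_hbar_le.
Qed.

Lemma Lsup_integrand_hbar_le (h : TX -> 'I_K -> R) x :
  ((pX x * xent hb x)%:E <= (pX x * KLfin (PC x) (PC_Y muY p Ys x))%:E
    + (\sum_(c < K) (pX x * PC x c)%:E * KL_Y muX muY p Ys x c)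
    + (pX x * xent h x)%:E)%E.
Proof.
have [pX0|x_pos] := eqVneq (pX x) 0; first last.
  have {}x_pos : 0 < pX x by rewrite lt_neqAle eq_sym x_pos margX_ge0.
  have KLE c : ((pX x * PC x c)%:E * KL_Y muX muY p Ys x c)%E
      = (pX x * (PC x c * fine (KL_Y muX muY p Ys x c)))%:E.
    by rewrite KL_Y_hbarE //= -EFinM mulrA.
  rewrite (eq_bigr _ (fun c _ => KLE c)) sumEFin -mulr_sumr -!EFinD lee_fin -!mulrDr.
  by apply: ler_wpM2l; [exact: margX_ge0 | exact: cross_entropy_hbar_le].
rewrite pX0 !mul0r big1 ?adde0 // => c _.
by rewrite mul0r mul0e.
Qed.

Lemma measurable_hbar c : measurable_fun setT (fun x => hb x c).
Proof.
apply: measurable_funD; last exact: measurable_cst.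
apply: measurable_sum => j.
by apply: measurable_funM; [exact: measurable_cst|exact: fX_meas].
Qed.

Lemma measurable_Lsup_integrand (h : TX -> 'I_K -> R) :
  (forall c, measurable_fun setT (fun x => h x c)) ->
  measurable_fun setT (fun x => (pX x * xent h x)%:E).
Proof.
move=> h_meas; apply/measurable_EFinP/measurable_funM; first exact: measurable_margX.
apply: measurable_sum => c; apply: measurable_funM => //.
under eq_fun do rewrite ln_softmax opprB.
apply: measurable_funB => //; apply: measurableT_comp; first exact: measurable_ln.
by apply: measurable_sum => i; apply: measurableT_comp; [exact: measurable_expR|exact: h_meas].
Qed.

Lemma integrable_Lsup_integrand (h : TX -> 'I_K -> R) :
  (forall c, measurable_fun setT (fun x => h x c)) ->
  Lsup muX muY p PC h \is a fin_num ->
  muX.-integrable setT (fun x => (pX x * xent h x)%:E).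
Proof.
move=> h_meas Lsup_fin; apply/integrableP; split; first exact: measurable_Lsup_integrand.
have ge0 x : (0 <= (pX x * xent h x)%:E)%E.
  by rewrite lee_fin mulr_ge0 ?margX_ge0 ?cross_entropy_softmax_ge0.
rewrite (eq_integral (fun x => (pX x * xent h x)%:E)); last by move=> x _; rewrite gee0_abs.
by rewrite -ge0_fin_numE // integral_ge0.
Qed.

Lemma Lsup_hbar_sub_le (h : TX -> 'I_K -> R) :
  (forall c, measurable_fun setT (fun x => h x c)) ->
  Lsup muX muY p PC h \is a fin_num -> Lsup muX muY p PC hb \is a fin_num ->
  muX.-integrable setT (fun x => (pX x * KLfin (PC x) (PC_Y muY p Ys x))%:E) ->
  muX.-integrable setT
    (fun x => (\sum_(c < K) (pX x * PC x c)%:E * KL_Y muX muY p Ys x c)%E) ->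
  (Lsup muX muY p PC hb - Lsup muX muY p PC h
    <= EKL_label muX muY p Ys PC + EKL_Y muX muY p Ys PC)%E.
Proof.
move=> h_meas h_fin hb_fin I_label I_Y.
have I_hb := integrable_Lsup_integrand measurable_hbar hb_fin.
have I_KL := integrableD measurableT I_label I_Y.
have I_h := integrable_Lsup_integrand h_meas h_fin.
have := le_integral measurableT I_hb (integrableD measurableT I_KL I_h)
  (fun x _ => Lsup_integrand_hbar_le h x).
rewrite (integralD measurableT I_KL I_h) (integralD measurableT I_label I_Y).
by move=> le; rewrite leeBlDr; [exact: le | exact: h_fin].
Qed.

End representation_bound.

Theorem theorem1 (R : realType) (dX dY : measure_display)
  (TX : measurableType dX) (TY : measurableType dY)
  (muX : {measure set TX -> \bar R}) (muY : {measure set TY -> \bar R})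
  (p : TX -> TY -> R)
  (K : nat) (Ys : 'I_K -> set TY) (PC : TX -> 'I_K -> R)
  (d : nat) (fX : TX -> 'I_d -> R) (fY : TY -> 'I_d -> R) (tau : R)
  (hstar : TX -> 'I_K -> R) :
  sigma_finite setT muX -> sigma_finite setT muY ->
  (forall x y, 0 <= p x y) ->
  measurable_fun setT (fun z : TX * TY => p z.1 z.2) ->
  (\int[muX]_x \int[muY]_y (p x y)%:E = 1)%E ->
  (forall x c, 0 <= PC x c) ->
  (forall x, \sum_(c < K) PC x c = 1) ->
  (forall c, measurable_fun setT (fun x => PC x c)) ->
  (forall i, measurable (Ys i)) ->
  (forall i j, i != j -> Ys i `&` Ys j = set0) ->
  (forall i, 0 < PY muX muY p (Ys i)) ->
  (forall x, 0 < margX muY p x -> forall i, 0 < PYx muY p x (Ys i)) ->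
  (forall j, measurable_fun setT (fun x => fX x j)) ->
  (forall j, measurable_fun setT (fun y => fY y j)) ->
  0 < tau ->
  (forall x y, 0 < margX muY p x -> Ytilde Ys y ->
     0 < p x y /\ 0 < margY muX p y) ->
  (exists Gamma : R, forall x y, 0 < margX muY p x -> Ytilde Ys y ->
     (\sum_(j < d) fX x j * fY y j) / tau
       = ln (p x y / (margX muY p x * margY muX p y)) + Gamma) ->
  (forall c, measurable_fun setT (fun x => hstar x c)) ->
  (forall h : TX -> 'I_K -> R, (forall c, measurable_fun setT (fun x => h x c)) ->
     (Lsup muX muY p PC hstar <= Lsup muX muY p PC h)%E) ->
  (forall i j, muY.-integrable (Ys i)
     (fun y => (pY_on muX muY p (Ys i) y * (fY y j / tau))%:E)) ->
  Lsup muX muY p PC hstar \is a fin_num ->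
  Lsup muX muY p PC (hbar muX muY p Ys fX fY tau) \is a fin_num ->
  muX.-integrable setT
    (fun x => (margX muY p x * KLfin (PC x) (PC_Y muY p Ys x))%:E) ->
  (forall x c, 0 < margX muY p x -> 0 < PC x c ->
     muY.-integrable (Ys c)
       (fun y => (pY_on muX muY p (Ys c) y
                  * ln (pY_on muX muY p (Ys c) y / pYx_on muY p x (Ys c) y))%:E)) ->
  muX.-integrable setT
    (fun x => (\sum_(c < K) (margX muY p x * PC x c)%:E * KL_Y muX muY p Ys x c)%E) ->
  (Lsup muX muY p PC (hbar muX muY p Ys fX fY tau) - Lsup muX muY p PC hstar
     <= EKL_label muX muY p Ys PC + EKL_Y muX muY p Ys PC)%E.
Proof.
move=> muX_sf muY_sf p_ge0 p_meas _ PC_ge0 PC_sum1 PC_meas Ys_meas Ys_disj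
  PY_gt0 PYx_gt0 fX_meas _ _ p_pos [Gamma gstarE] hstar_meas _ integrable_fY
  hstar_fin hbar_fin I_label _ I_Y.
exact: (Lsup_hbar_sub_le muX_sf muY_sf p_ge0 p_meas Ys_meas Ys_disj PY_gt0
  PYx_gt0 p_pos gstarE integrable_fY PC_ge0 PC_sum1 PC_meas fX_meas hstar_meas
  hstar_fin hbar_fin I_label I_Y).
Qed.
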